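(* Let $\lambda>0$, $p\in(0,1)$, $\lambda_{max}>0$, $R>0$, and for $q\in[0,1]$ let $f_1(q)=\frac{pq}{p+q-pq}$ and $C_1(q)=\lambda f_1(q)\exp\!\big(-\frac{\lambda f_1(q)}{\lambda_{max}}\big)R$. If $\frac{\lambda_{max}}{\lambda}\le p$, then $q^\star=\frac{p\lambda_{max}}{\lambda p-\lambda_{max}(1-p)}\in(0,1]$ maximizes $C_1$ over $[0,1]$; if $\frac{\lambda_{max}}{\lambda}>p$, then $q^\star=1$ maximizes $C_1$ over $[0,1]$.
   Context: This is the unit battery capacity ($B=1$) case of the ALOHA energy-harvesting model: $f_1(q)$ is the probability that a transmitter (energy arrivals i.i.d. Bernoulli($p$) per slot, battery of capacity $1$, transmits with probability $q$ when the battery is nonempty) transmits in a slot, and $C_1(q)$ is the transmission capacity of a Poisson network of density $\lambda$ with $\lambda_{max}=\frac{1}{d^2\theta^{2/\alpha}\kappa(\alpha)}$, $\kappa(\alpha)=\frac{2\pi^2}{\alpha\sin(2\pi/\alpha)}$, $R=\log(1+\theta)$. *)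

From Stdlib Require Import Reals.
Open Scope R_scope.

Definition ftx1 (p q : R) : R := p * q / (p + q - p * q).

Definition cap1 (lam lmax rate p q : R) : R :=
  lam * ftx1 p q * exp (- (lam * ftx1 p q / lmax)) * rate.

Definition maximizes_on_01 (g : R -> R) (qs : R) : Prop :=
  0 <= qs <= 1 /\ forall q, 0 <= q <= 1 -> g q <= g qs.

(* Write C_1(q) = lam R h(f_1(q)) with h(x) = x exp(-lam x / lmax). The function h increases
   up to its peak at x = lmax/lam and decreases afterwards, while f_1 increases from
   f_1(0) = 0 to f_1(1) = p. If lmax/lam <= p, the peak is attained by f_1 at the q* of the
   statement, so C_1 at q* equals the global maximum lam R h(lmax/lam); otherwise f_1 stays below the peak on
   [0,1] and its largest value, at q = 1, is best. *)
From Stdlib Require Import Reals Lra.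
Open Scope R_scope.

(* From e^t >= 1 + t with t = a (x - y): y e^(-a y) >= y (1 + a (x - y)) e^(-a x), and
   y (1 + a (x - y)) - x = (y - x)(1 - a y). *)
Lemma mul_exp_opp_le (a x y : R) :
  0 <= y -> 0 <= (y - x) * (1 - a * y) ->
  x * exp (- (a * x)) <= y * exp (- (a * y)).
Proof.
  intros Hy Hxy.
  assert (Hsplit : y * exp (- (a * y)) = y * exp (a * (x - y)) * exp (- (a * x))).
  { rewrite Rmult_assoc, <- exp_plus. f_equal. f_equal. ring. }
  rewrite Hsplit.
  apply Rmult_le_compat_r; [left; apply exp_pos|].
  assert (Htangent : y * (1 + a * (x - y)) <= y * exp (a * (x - y))).
  { apply Rmult_le_compat_l; [exact Hy | apply exp_ineq1_le]. }
  nra.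
Qed.

Lemma ftx1_ge0_le (p q : R) : 0 < p < 1 -> 0 <= q <= 1 -> 0 <= ftx1 p q <= p.
Proof.
  intros Hp Hq. unfold ftx1.
  assert (Hden : 0 < p + q - p * q) by nra.
  split.
  - apply Rmult_le_pos; [nra | left; apply Rinv_0_lt_compat, Hden].
  - apply Rmult_le_reg_r with (p + q - p * q); [exact Hden|].
    unfold Rdiv; rewrite Rmult_assoc, Rinv_l by lra. nra.
Qed.

Lemma ftx1_1 (p : R) : 0 < p -> ftx1 p 1 = p.
Proof. intro Hp. unfold ftx1. field. lra. Qed.

Lemma ftx1_qstar (lam p lmax : R) :
  0 < lam -> 0 < p -> lam * p - lmax * (1 - p) <> 0 ->
  ftx1 p (p * lmax / (lam * p - lmax * (1 - p))) = lmax / lam.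
Proof.
  intros Hl Hp Hd. unfold ftx1.
  replace (p + p * lmax / (lam * p - lmax * (1 - p))
             - p * (p * lmax / (lam * p - lmax * (1 - p))))
    with (p * p * lam / (lam * p - lmax * (1 - p))) by (field; exact Hd).
  field. repeat split; lra.
Qed.

Lemma qstar_in_01 (lam p lmax : R) :
  0 < p < 1 -> 0 < lmax -> lmax <= lam * p ->
  0 < p * lmax / (lam * p - lmax * (1 - p)) <= 1.
Proof.
  intros Hp Hm Hc.
  assert (Hd : 0 < lam * p - lmax * (1 - p)) by nra.
  split.
  - apply Rdiv_lt_0_compat; nra.
  - apply Rmult_le_reg_r with (lam * p - lmax * (1 - p)); [exact Hd|].
    unfold Rdiv; rewrite Rmult_assoc, Rinv_l by lra. nra.
Qed.

Lemma cap1_le (lam lmax rate p q qs : R) :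
  0 < lam -> 0 < lmax -> 0 < rate -> 0 <= ftx1 p qs ->
  0 <= (ftx1 p qs - ftx1 p q) * (1 - lam / lmax * ftx1 p qs) ->
  cap1 lam lmax rate p q <= cap1 lam lmax rate p qs.
Proof.
  intros Hl Hm Hr Hf Hcmp. unfold cap1.
  assert (Hh := mul_exp_opp_le (lam / lmax) _ _ Hf Hcmp).
  replace (lam * ftx1 p q / lmax) with (lam / lmax * ftx1 p q) by (field; lra).
  replace (lam * ftx1 p qs / lmax) with (lam / lmax * ftx1 p qs) by (field; lra).
  apply Rmult_le_compat_r; [lra|].
  rewrite !Rmult_assoc. apply Rmult_le_compat_l; lra.
Qed.

Theorem corollary1 (lam p lmax rate : R) :
  0 < lam -> 0 < p < 1 -> 0 < lmax -> 0 < rate ->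
  (lmax / lam <= p ->
     0 < p * lmax / (lam * p - lmax * (1 - p)) <= 1 /\
     maximizes_on_01 (cap1 lam lmax rate p) (p * lmax / (lam * p - lmax * (1 - p)))) /\
  (lmax / lam > p -> maximizes_on_01 (cap1 lam lmax rate p) 1).
Proof.
  intros Hl Hp Hm Hr.
  assert (Hratio : lmax = lam * (lmax / lam)) by (field; lra).
  assert (Hpeak : lam / lmax * (lmax / lam) = 1) by (field; lra).
  split.
  - intro Hc.
    assert (Hq := qstar_in_01 lam p lmax Hp Hm ltac:(nra)).
    assert (Hf := ftx1_qstar lam p lmax Hl (proj1 Hp) ltac:(nra)).
    split; [exact Hq|]. split; [lra|].
    intros q _. apply cap1_le; rewrite ?Hf, ?Hpeak; try lra.
    apply Rlt_le, Rdiv_lt_0_compat; lra.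
  - intro Hc. split; [lra|]. intros q Hq.
    assert (Hf := ftx1_ge0_le p q Hp Hq).
    assert (Hbelow : lam / lmax * p < 1).
    { rewrite <- Hpeak. apply Rmult_lt_compat_l; [apply Rdiv_lt_0_compat|]; lra. }
    apply cap1_le; rewrite ?ftx1_1 by lra; try lra.
    apply Rmult_le_pos; lra.
Qed.
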